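(* In the Setting below, for any index $i$ and any two $C_i$-tests $S,S'\in\mathcal{T}$, either $L(S)\subseteq L(S')$, or $L(S')\subseteq L(S)$, or $L(S)\cap L(S')=\emptyset$.
   Context: A test $T$ on $[n]$ separates $i\neq j$ if $|\{i,j\}\cap T|=1$. The classes induced by a collection $\mathcal{T}'$ of tests are the equivalence classes of the relation ''$i,j$ are not separated by any test of $\mathcal{T}'$''. Setting: $\mathcal{T}$ is a collection of distinct tests on $[n]$ that is a test cover, and $\mathcal{F}\subseteq\mathcal{T}$ has the property that for every $T\in\mathcal{T}\setminus\mathcal{F}$, $\mathcal{F}\cup\{T\}$ induces at most one more class than $\mathcal{F}$, and for every two tests $T,T'\in\mathcal{T}\setminus\mathcal{F}$, $\mathcal{F}\cup\{T,T'\}$ induces at most two more classes than $\mathcal{F}$. Let $C_1,\dots,C_l$ be the classes induced by $\mathcal{F}$. For $C\subseteq[n]$, a test $S\in\mathcal{T}$ is a $C$-test if $S\cap C\neq\emptyset$ and $C\setminus S\neq\emptyset$; its local portion is $L(S)=S\cap C$ and global portion $G(S)=S\setminus C$. It is assumed that every $C_i$-test $S$ satisfies $|S\cap C_i|\le |C_i|/2$ (for each $i$). *)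

(* Ground set [n] is modelled as 'I_n; tests are {set 'I_n};
   collections of (distinct) tests are {set {set 'I_n}}. *)
From mathcomp Require Import all_boot.
Set Implicit Arguments. Unset Strict Implicit. Unset Printing Implicit Defensive.

Section TestCover.
Variable n : nat.
Implicit Types (T S C : {set 'I_n}) (Ts : {set {set 'I_n}}).

(* T separates i and j: |{i,j} ∩ T| = 1 *)
Definition separates T (i j : 'I_n) : bool := (i \in T) != (j \in T).

Definition unsep Ts (i j : 'I_n) : bool := [forall T in Ts, ~~ separates T i j].

Definition class_of Ts (i : 'I_n) : {set 'I_n} := [set j | unsep Ts i j].

Definition classes Ts : {set {set 'I_n}} := [set class_of Ts i | i : 'I_n].

Definition num_classes Ts : nat := #|classes Ts|.

Definition test_cover Ts : Prop :=
  forall i j : 'I_n, i != j -> exists2 T, T \in Ts & separates T i j.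

Definition is_Ctest C S : bool := (S :&: C != set0) && (C :\: S != set0).

Definition local_portion C S : {set 'I_n} := S :&: C.
Definition global_portion C S : {set 'I_n} := S :\: C.

End TestCover.

(* Let C be a class of F and let S, S' be C-tests whose local portions
   L = S :&: C and L' = S' :&: C are neither nested nor disjoint, so there
   are points a in L :&: L', b in L :\: L' and c in L' :\: L.  Since
   2|L| <= |C|, 2|L'| <= |C| and L, L' meet, L :|: L' misses a point d of C.
   Any two of a, b, c, d are separated by S or S', so adding S and S' to F
   splits C into at least four classes, i.e. creates at least three new ones.
   But a C-test splits C, hence is not in F, and the hypothesis on pairs of
   tests outside F allows at most two new classes. *)
From mathcomp Require Import all_boot.
From mathcomp Require Import zify.
Set Implicit Arguments. Unset Strict Implicit. Unset Printing Implicit Defensive.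

Lemma crossing_avoids (I : finType) (C L L' : {set I}) (a : I) :
  2 * #|L| <= #|C| -> 2 * #|L'| <= #|C| ->
  a \in L :&: L' -> exists2 d, d \in C & d \notin L :|: L'.
Proof.
move=> hL hL' aLL'.
have [covered | /subsetPn[d dC dL]] := boolP (C \subset L :|: L'); last by exists d.
have := subset_leq_card covered; rewrite cardsU.
have : 0 < #|L :&: L'| by rewrite card_gt0; apply/set0Pn; exists a.
have := subset_leq_card (subsetIl L L'); lia.
Qed.

Lemma nested_disjoint_or_cross (I : finType) (A B : {set I}) :
  [\/ A \subset B, B \subset A | [disjoint A & B]] \/
  exists a b c, [/\ a \in A :&: B, b \in A :\: B & c \in B :\: A].
Proof.
have [AB | /subsetPn[b bA bB]] := boolP (A \subset B); first by left; apply: Or31.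
have [BA | /subsetPn[c cB cA]] := boolP (B \subset A); first by left; apply: Or32.
have [dis | /set0Pn[a aAB]] := boolP (A :&: B == set0).
  by left; apply: Or33; rewrite -setI_eq0.
by right; exists a, b, c; rewrite aAB !inE bA bB cB cA.
Qed.

Section Classes.
Variable n : nat.
Implicit Types (Ts Us : {set {set 'I_n}}) (i j x y : 'I_n) (T : {set 'I_n}).

Lemma unsepP Ts i j :
  reflect (forall T, T \in Ts -> (i \in T) = (j \in T)) (unsep Ts i j).
Proof.
apply: (iffP forall_inP) => H T HT; last by rewrite /separates (H T HT) eqxx.
by have := H T HT; rewrite /separates negbK => /eqP.
Qed.

Lemma class_self Ts i : i \in class_of Ts i.
Proof. by rewrite inE; apply/unsepP. Qed.

Lemma in_class_unsep Ts i x y :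
  x \in class_of Ts i -> y \in class_of Ts i -> unsep Ts x y.
Proof.
rewrite !inE => /unsepP Hx /unsepP Hy; apply/unsepP => T HT.
by rewrite -Hx // Hy.
Qed.

Lemma class_eq Ts i j : unsep Ts i j -> class_of Ts i = class_of Ts j.
Proof.
move/unsepP=> H; apply/setP => k; rewrite !inE.
by apply/unsepP/unsepP => H' T HT; [rewrite -H // H' | rewrite H // H'].
Qed.

Lemma separated_classes Ts T x y :
  T \in Ts -> separates T x y -> class_of Ts x != class_of Ts y.
Proof.
move=> HT sep; apply: contraTneq sep => E.
have : y \in class_of Ts x by rewrite E class_self.
by rewrite inE => /unsepP yx; rewrite /separates yx // eqxx.
Qed.

Lemma unsep_sub Ts Us i j : Ts \subset Us -> unsep Us i j -> unsep Ts i j.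
Proof. by move=> sub /unsepP H; apply/unsepP => T /(subsetP sub)/H. Qed.

(* A C-test splits C, so it cannot belong to Ts when C is a class of Ts. *)
Lemma Ctest_notin Ts C S : C \in classes Ts -> is_Ctest C S -> S \notin Ts.
Proof.
case/imsetP=> i _ -> /andP[/set0Pn[x] /setIP[xS xC] /set0Pn[y] /setDP[yC yS]].
apply: contra yS => STs; have /unsepP := in_class_unsep xC yC.
by move/(_ S STs) <-.
Qed.

(* If Ts \subset Us and a class C of Ts contains the points of s, which lie
   in pairwise distinct Us-classes, then Us has at least size s - 1 more
   classes than Ts: each Us-class lies in a unique Ts-class (its image under
   [coarse]), every Ts-class contains some Us-class, and C contains at least
   size s of them. *)
Lemma num_classes_refine Ts Us C (s : seq 'I_n) :
  Ts \subset Us -> C \in classes Ts -> {subset s <= C} ->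
  uniq (map (class_of Us) s) ->
  num_classes Ts + size s <= (num_classes Us).+1.
Proof.
move=> sub CTs sC us; have /imsetP[i0 _ defC] := CTs.
pose coarse (D : {set 'I_n}) := class_of Ts (odflt i0 [pick x in D]).
have coarseE y : coarse (class_of Us y) = class_of Ts y.
  rewrite /coarse; case: pickP => [x Hx | /(_ y)] /=; last by rewrite class_self.
  apply/esym/class_eq/(unsep_sub sub).
  exact: in_class_unsep (class_self Us y) Hx.
pose inC : {set {set 'I_n}} := [set D | coarse D == C].
have in_s : #|[set class_of Us x | x in s]| <= #|classes Us :&: inC|.
  apply/subset_leq_card/subsetP => _ /imsetP[x xs ->].
  rewrite !inE coarseE imset_f //= defC; apply/eqP/class_eq.
  by apply: in_class_unsep (class_self Ts i0); rewrite -defC sC.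
have out_C : #|classes Ts :\ C| <= #|classes Us :\: inC|.
  apply: leq_trans (leq_imset_card coarse _); apply/subset_leq_card/subsetP.
  move=> E /setD1P[EnC /imsetP[y _ defE]]; rewrite {E}defE in EnC *.
  apply/imsetP; exists (class_of Us y).
    by rewrite !inE coarseE EnC imset_f.
  by rewrite coarseE.
have s_card : #|[set class_of Us x | x in s]| = size s.
  by rewrite -(size_map (class_of Us)) -(card_uniqP us); apply: eq_card => D;
    apply/imsetP/mapP => -[x xs ->]; exists x.
have := cardsID inC (classes Us); have := cardsD1 C (classes Ts).
rewrite CTs /num_classes add1n; lia.
Qed.

(* Two tests whose local portions in C cross, each portion of at most half
   the size of C, split C into at least four classes: besides the witnesses
   a, b, c of the crossing there is a point d of C outside both portions, and
   any two of a, b, c, d are separated by S or by S'. *)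
Lemma crossing_tests_split Us C S S' a b c :
  S \in Us -> S' \in Us ->
  2 * #|local_portion C S| <= #|C| -> 2 * #|local_portion C S'| <= #|C| ->
  a \in local_portion C S :&: local_portion C S' ->
  b \in local_portion C S :\: local_portion C S' ->
  c \in local_portion C S' :\: local_portion C S ->
  exists s : seq 'I_n,
    [/\ size s = 4, {subset s <= C} & uniq (map (class_of Us) s)].
Proof.
move=> SUs S'Us halfS halfS' aLL' bL cL'.
have [d dC dL] := crossing_avoids halfS halfS' aLL'.
case/setIP: aLL' => /setIP[aS aC] /setIP[aS' _].
case/setDP: bL => /setIP[bS bC]; rewrite inE bC andbT => bS'.
case/setDP: cL' => /setIP[cS' cC]; rewrite inE cC andbT => cS.
rewrite !inE dC !andbT negb_or in dL; case/andP: dL => dS dS'.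
have sep T x y : T \in Us -> x \in T -> y \notin T -> class_of Us x != class_of Us y.
  by move=> TUs xT yT; apply: (separated_classes TUs); rewrite /separates xT (negbTE yT).
exists [:: a; b; c; d]; split=> //; first by move=> x; rewrite !inE => /or4P[] /eqP->.
rewrite /= !inE !negb_or (sep S' a b) ?(sep S a c) ?(sep S a d) ?(sep S b c) //.
by rewrite (sep S b d) ?(sep S' c d).
Qed.

End Classes.

Theorem mainTheorem10 (n : nat) (Tt F : {set {set 'I_n}}) :
  test_cover Tt ->
  F \subset Tt ->
  (forall T, T \in Tt :\: F -> num_classes (T |: F) <= (num_classes F).+1) ->
  (forall T T', T \in Tt :\: F -> T' \in Tt :\: F ->
     num_classes (T |: (T' |: F)) <= (num_classes F).+2) ->
  (forall C, C \in classes F -> forall S, S \in Tt -> is_Ctest C S ->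
     2 * #|local_portion C S| <= #|C|) ->
  forall C, C \in classes F ->
  forall S S', S \in Tt -> S' \in Tt -> is_Ctest C S -> is_Ctest C S' ->
    [\/ local_portion C S \subset local_portion C S',
        local_portion C S' \subset local_portion C S
      | [disjoint local_portion C S & local_portion C S']].
Proof.
move=> _ _ _ two_new half C CF S S' STt S'Tt CS CS'.
case: (nested_disjoint_or_cross (local_portion C S) (local_portion C S')) =>
  [// | [a [b [c [aLL' bL cL']]]]].
pose G := S |: (S' |: F).
have FG : F \subset G by apply/subsetP => X XF; rewrite !inE XF !orbT.
have SG : S \in G by rewrite !inE eqxx.
have S'G : S' \in G by rewrite !inE eqxx orbT.
have [s [size_s sC s_split]] := crossing_tests_split SG S'G
  (half C CF S STt CS) (half C CF S' S'Tt CS') aLL' bL cL'.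
have four_new := num_classes_refine FG CF sC s_split; rewrite size_s in four_new.
(* C-tests lie outside F, so S and S' together add at most two classes. *)
have notF X : X \in Tt -> is_Ctest C X -> X \in Tt :\: F.
  by move=> XTt XC; rewrite inE XTt (Ctest_notin CF XC).
have two_new_SS' : num_classes G <= (num_classes F).+2 :=
  two_new S S' (notF S STt CS) (notF S' S'Tt CS').
have := leq_trans four_new (two_new_SS' : (num_classes G).+1 <= (num_classes F).+3).
by rewrite addn4 ltnn.
Qed.
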